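(* Let $B=\bigoplus_{i\in\mathbb{Z}}B_i$ be a $\mathbb{Z}$-graded noetherian normal integral domain of characteristic zero with $e(B)=1$. Let $d\in\mathbb{N}\setminus\{0,1\}$ and assume that $d$ is a unit of $B$ and that no height-$1$ prime ideal of $B$ contains $\mathcal{X}_d$. Then every derivation $\delta:B^{(d)}\to B^{(d)}$ extends uniquely to a derivation $D:B\to B$, and if $\delta$ is locally nilpotent then so is $D$.
   Context: $e(B)=\gcd\{i\in\mathbb{Z}:B_i\neq0\}$. $B^{(d)}=\bigoplus_{i\in\mathbb{Z}}B_{di}$. $\mathcal{X}_d$ is the set of nonzero homogeneous $x\in B$ with $\gcd(\deg x,d)=1$. *)

From HB Require Import structures.
From mathcomp Require Import all_boot all_order all_algebra.
From mathcomp Require Export fraction.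
Set Implicit Arguments. Unset Strict Implicit. Unset Printing Implicit Defensive.
Import Order.TTheory GRing.Theory Num.Theory.
Local Open Scope ring_scope.

Section GradedDefs.
Variable B : idomainType.

(* A Z-grading of B, given by its family of homogeneous-component projections
   comp i : B -> B (comp i x = component of degree i of x).  B_i is the set of
   x with comp i x = x. *)
Definition is_Zgrading (comp : int -> B -> B) : Prop :=
  [/\ (forall i x y, comp i (x + y) = comp i x + comp i y),
      (forall x, exists s : seq int,
          (forall i, i \notin s -> comp i x = 0) /\ x = \sum_(i <- undup s) comp i x),
      (forall i j x, comp i (comp j x) = if i == j then comp j x else 0) &
      (forall i j x y, comp i x = x -> comp j y = y -> comp (i + j) (x * y) = x * y)].

Definition homog (comp : int -> B -> B) (i : int) (x : B) : Prop := comp i x = x.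

(* e(B) = 1 : the gcd of {i | B_i <> 0} equals 1 *)
Definition e_eq1 (comp : int -> B -> B) : Prop :=
  forall n : nat,
    (forall i : int, (exists x, x != 0 /\ homog comp i x) -> (n%:Z %| i)%Z) -> n = 1%N.

Definition in_veronese (comp : int -> B -> B) (d : nat) (x : B) : Prop :=
  forall i : int, ~~ (d%:Z %| i)%Z -> comp i x = 0.

Definition in_Xd (comp : int -> B -> B) (d : nat) (x : B) : Prop :=
  x != 0 /\ exists i : int, homog comp i x /\ coprimez i d%:Z.

Definition is_ideal (I : B -> Prop) : Prop :=
  [/\ I 0, (forall x y, I x -> I y -> I (x + y)) & (forall a x, I x -> I (a * x))].

Definition is_prime_ideal (P : B -> Prop) : Prop :=
  [/\ is_ideal P, ~ P 1 & (forall a b, P (a * b) -> P a \/ P b)].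

Definition is_height1_prime (P : B -> Prop) : Prop :=
  [/\ is_prime_ideal P, (exists x, x != 0 /\ P x) &
      (forall Q, is_prime_ideal Q -> (forall x, Q x -> P x) ->
          (exists x, x != 0 /\ Q x) -> forall x, P x -> Q x)].

Definition noetherian_ring : Prop :=
  forall I : nat -> B -> Prop, (forall n, is_ideal (I n)) ->
    (forall n x, I n x -> I n.+1 x) ->
    exists N, forall n, (N <= n)%N -> forall x, I n x <-> I N x.

Definition normal_domain : Prop :=
  forall (p : {poly B}) (z : {fraction B}), p \is monic ->
    root (map_poly (@FracField.tofrac B) p) z -> exists b : B, z = FracField.tofrac b.

Definition char0 : Prop := forall n : nat, (n.+1)%:R != 0 :> B.

Definition is_derivation (D : B -> B) : Prop :=
  (forall x y, D (x + y) = D x + D y) /\ (forall x y, D (x * y) = D x * y + x * D y).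

(* a derivation of the subring S (given as a predicate), represented by a map
   B -> B whose values outside S are irrelevant *)
Definition is_derivation_on (S : B -> Prop) (delta : B -> B) : Prop :=
  [/\ (forall x, S x -> S (delta x)),
      (forall x y, S x -> S y -> delta (x + y) = delta x + delta y) &
      (forall x y, S x -> S y -> delta (x * y) = delta x * y + x * delta y)].

Definition locally_nilpotent_on (S : B -> Prop) (delta : B -> B) : Prop :=
  forall x, S x -> exists n : nat, iter n delta x = 0.

End GradedDefs.

(* On a homogeneous u, a derivation D of B extending delta must satisfy
   d u^(d-1) D(u) = delta(u^d), because u^d lies in B^(d).  This forces D on
   homogeneous elements, whence uniqueness, and by additivity it defines a
   derivation of B into its fraction field extending delta.  Its values lie in B
   by Krull's criterion: for x in X_d, of degree coprime to d, some u x^k lies in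
   B^(d), so x^m D(u) lies in B for some m; since no height-one prime contains
   X_d and B is normal noetherian, D(u) lies in B.  For local nilpotency put
   a = u^d and y_n = D^n(u) u^(d-1), which lie in B^(d) and satisfy
   d a y_(n+1) = d a delta(y_n) - (d-1) y_n delta(a); by the Leibniz rule the
   delta-nilpotency order of y_(n+1) is smaller than that of y_n. *)

From HB Require Import structures.
From mathcomp Require Import all_boot all_order all_algebra.
From mathcomp Require Import ring zify.
From Stdlib Require Import Classical ClassicalEpsilon.
Import Order.TTheory GRing.Theory Num.Theory.
Local Open Scope ring_scope.
Set Implicit Arguments. Unset Strict Implicit. Unset Printing Implicit Defensive.

Local Notation "x %:F" := (@FracField.tofrac _ x).

Lemma char0_mulrn_eq0 (R : idomainType) (x : R) n : char0 R -> (0 < n)%N ->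
  (x *+ n == 0) = (x == 0).
Proof. by case: n => // n hchar _; rewrite -mulr_natr mulf_eq0 (negbTE (hchar n)) orbF. Qed.

Lemma eq_big_uniq_support (V : nmodType) (I : eqType) (F : I -> V) (r1 r2 : seq I) :
  uniq r1 -> uniq r2 -> (forall i, F i != 0 -> i \in r1) ->
  (forall i, F i != 0 -> i \in r2) -> \sum_(i <- r1) F i = \sum_(i <- r2) F i.
Proof.
move=> u1 u2 h1 h2.
have drop0 r : \sum_(i <- r) F i = \sum_(i <- [seq i <- r | F i != 0]) F i.
  by rewrite big_filter [in RHS]big_mkcond /=; apply: eq_bigr => i _; case: eqP => // ->.
rewrite drop0 (drop0 r2); apply/perm_big/uniq_perm; try exact: filter_uniq.
by move=> i; rewrite !mem_filter; case Fi: (F i != 0) => //=; rewrite h1 ?h2.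
Qed.

Lemma coprimez_dvdz_addM (d : nat) (i j : int) : (0 < d)%N -> coprimez i d%:Z ->
  exists k : nat, (d%:Z %| j + k%:Z * i)%Z.
Proof.
move=> d_gt0 /coprimezP [[a b] /= abE].
have d0 : d%:Z != 0 by rewrite eqz_nat -lt0n.
exists `|((- (j * a)) %% d%:Z)%Z|%N; rewrite gez0_abs ?modz_ge0 //.
rewrite /modz; set q := (_ %/ _)%Z; apply/dvdzP; exists (j * b - q * i).
have jE : j = j * (a * i + b * d%:Z) by rewrite abE mulr1.
by rewrite {1}jE; ring.
Qed.

Section KrullCriterion.
Variable R : idomainType.
Implicit Types (w z : {fraction R}) (a b c p t x : R).

Definition in_ring z : Prop := exists b, z = b%:F.

Lemma in_ring_tofrac b : in_ring b%:F. Proof. by exists b. Qed.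

Lemma in_ringD z1 z2 : in_ring z1 -> in_ring z2 -> in_ring (z1 + z2).
Proof. by move=> [b1 ->] [b2 ->]; exists (b1 + b2); rewrite tofracD. Qed.

Lemma in_ringB z1 z2 : in_ring z1 -> in_ring z2 -> in_ring (z1 - z2).
Proof. by move=> [b1 ->] [b2 ->]; exists (b1 - b2); rewrite tofracB. Qed.

Lemma in_ringM z1 z2 : in_ring z1 -> in_ring z2 -> in_ring (z1 * z2).
Proof. by move=> [b1 ->] [b2 ->]; exists (b1 * b2); rewrite tofracM. Qed.

Lemma in_ring_sum (I : Type) (r : seq I) (F : I -> {fraction R}) :
  (forall i, in_ring (F i)) -> in_ring (\sum_(i <- r) F i).
Proof.
move=> hF; elim: r => [|i r IH]; first by rewrite big_nil; exists 0; rewrite tofrac0.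
by rewrite big_cons; apply: in_ringD.
Qed.

Lemma tofrac_inj : injective (@FracField.tofrac R).
Proof. by move=> x y /eqP; rewrite tofrac_eq => /eqP. Qed.

Lemma exists_denominator z : exists2 c, c != 0 & in_ring (c%:F * z).
Proof.
elim/quotW: z => x; exists (x.2); first exact: denom_ratioP.
exists (x.1); unlock FracField.tofrac; rewrite -[_ * _]/(FracField.mul _ _) -pi_mul.
apply/eqmodP; rewrite /= equivfE /mulf.
by rewrite !numden_Ratio ?oner_neq0 ?mul1r ?denom_ratioP // mulr1.
Qed.

Definition conductor w b : Prop := in_ring (b%:F * w).

Lemma conductor_ideal w : is_ideal (conductor w).
Proof.
split.
- by exists 0; rewrite tofrac0 mul0r.
- by move=> x y [b1 h1] [b2 h2]; exists (b1 + b2); rewrite !tofracD mulrDl h1 h2.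
- by move=> a x [b h]; exists (a * b); rewrite !tofracM -mulrA h.
Qed.

Lemma conductor1 w : conductor w 1 <-> in_ring w.
Proof. by rewrite /conductor tofrac1 mul1r. Qed.

Lemma conductorM w b t : conductor w (b * t) <-> conductor (w * t%:F) b.
Proof. by rewrite /conductor tofracM mulrAC -mulrA. Qed.

Lemma conductor_mulr w t b : conductor w b -> conductor (w * t%:F) b.
Proof. by move=> wb; apply/conductorM; rewrite mulrC; case: (conductor_ideal w) => _ _; apply. Qed.

Hypothesis hnoeth : noetherian_ring R.

Lemma noetherian_maximal (X : Type) (I : X -> R -> Prop) (good : X -> Prop) (i0 : X) :
  (forall i, is_ideal (I i)) -> good i0 ->
  exists2 i, good i &
    forall j, good j -> (forall b, I i b -> I j b) -> forall b, I j b -> I i b.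
Proof.
move=> Iid good0; apply: NNPP => nomax.
pose larger i j := [/\ good j, forall b, I i b -> I j b & exists2 b, I j b & ~ I i b].
have step i : good i -> exists j, larger i j.
  move=> gi; apply: NNPP => nostep; apply: nomax; exists i => // j gj sub b Ijb.
  by apply: NNPP => nIib; apply: nostep; exists j; split => //; exists b.
pose next i := epsilon (inhabits i0) (larger i).
have nextP i : good i -> larger i (next i) by move=> gi; apply: epsilon_spec; apply: step.
pose chain n := iter n next i0.
have good_chain n : good (chain n) by elim: n => //= n IH; case: (nextP _ IH).
have chain_incr n b : I (chain n) b -> I (chain n.+1) b.
  by case: (nextP _ (good_chain n)) => _ + _; apply.
have [N hN] := hnoeth (fun n => Iid (chain n)) chain_incr.
have [_ _ [b Ib nIb]] := nextP _ (good_chain N).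
by apply: nIb; apply/(hN N.+1 (leqnSn N)).
Qed.

Lemma exists_prime_conductor w : ~ in_ring w ->
  exists t, is_prime_ideal (conductor (w * t%:F)).
Proof.
move=> nw.
have [|t nwt maxt] := @noetherian_maximal _ (fun t => conductor (w * t%:F))
  (fun t => ~ in_ring (w * t%:F)) 1 (fun t => conductor_ideal _).
  by rewrite tofrac1 mulr1.
exists t; split; [exact: conductor_ideal | by move/conductor1 |].
move=> a b Cab; case: (classic (conductor (w * t%:F) b)) => [|nCb]; [by right | left].
apply: (maxt (t * b)); rewrite tofracM mulrA.
- by move/conductor1/conductorM; rewrite mul1r.
- by move=> x; apply: conductor_mulr.
- exact/conductorM.
Qed.

Hypothesis hnorm : normal_domain R.

Lemma almost_integral_in_ring w p : p != 0 ->
  (forall n, in_ring (p%:F * w ^+ n)) -> in_ring w.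
Proof.
move=> p0 hw.
pose I n b := exists r : nat -> R, b%:F = \sum_(k < n.+1) (r k)%:F * p%:F * w ^+ k.
have Iid n : is_ideal (I n).
  split.
  - by exists (fun=> 0); rewrite tofrac0 big1 // => k _; rewrite !mul0r.
  - move=> x y [r hr] [r' hr']; exists (fun k => r k + r' k).
    by rewrite tofracD hr hr' -big_split; apply: eq_bigr => k _; rewrite tofracD !mulrDl.
  - move=> a x [r hr]; exists (fun k => a * r k).
    by rewrite tofracM hr mulr_sumr; apply: eq_bigr => k _; rewrite tofracM !mulrA.
have Iinc n x : I n x -> I n.+1 x.
  move=> [r hr]; exists (fun k => if (k < n.+1)%N then r k else 0).
  rewrite big_ord_recr /= ltnn tofrac0 !mul0r addr0 hr.
  by apply: eq_bigr => k _; rewrite /= ltn_ord.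
have [N hN] := hnoeth Iid Iinc.
have [b hb] := hw N.+1.
have [|r hr] := (hN N.+1 (leqnSn N) b).1.
  exists (fun k => if k == N.+1 then 1 else 0).
  rewrite big_ord_recr /= eqxx tofrac1 mul1r -hb big1 ?add0r // => k _.
  by rewrite (ltn_eqF (ltn_ord k)) tofrac0 !mul0r.
have wN : w ^+ N.+1 = \sum_(k < N.+1) (r k)%:F * w ^+ k.
  apply: (mulfI (_ : p%:F != 0)); first by rewrite tofrac_eq0.
  by rewrite hb hr mulr_sumr; apply: eq_bigr => k _; rewrite -mulrA mulrCA.
pose q : {poly R} := 'X^(N.+1) - \poly_(k < N.+1) r k.
have q_monic : q \is monic.
  rewrite monicE /q lead_coefDl ?lead_coefXn // size_polyN size_polyXn ltnS.
  exact: size_poly.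
have [|b' ->] := hnorm q_monic (z := w); last exact: in_ring_tofrac.
rewrite /root /q rmorphB /= map_polyXn hornerD hornerN hornerXn.
rewrite poly_def rmorph_sum /= horner_sum wN subr_eq0; apply/eqP.
by apply: eq_bigr => k _; rewrite map_polyZ /= hornerZ map_polyXn hornerXn.
Qed.

Lemma in_ring_of_mul_stable w (Q : R -> Prop) q : q != 0 -> Q q ->
  (forall x, Q x -> exists2 s, Q s & x%:F * w = s%:F) -> in_ring w.
Proof.
move=> q0 Qq stable; apply: (almost_integral_in_ring q0) => n.
suff [qn _ <-] : exists2 qn, Q qn & qn%:F = q%:F * w ^+ n by exact: in_ring_tofrac.
elim: n => [|n [qn Qqn qnE]]; first by exists q; rewrite ?expr0 ?mulr1.
by have [s Qs qnw] := stable _ Qqn; exists s; rewrite // -qnw qnE exprSr mulrA.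
Qed.

(* [conductor (a / c)] is the colon ideal [(c) : a]: a prime of this form is
   associated to the principal ideal [(c)], and such primes have height one. *)
Lemma prime_conductor_height1 w : is_prime_ideal (conductor w) ->
  is_height1_prime (conductor w).
Proof.
move=> Pprime; have [[P0 PD PM] nP1 Ppr] := Pprime.
have nw : ~ in_ring w by move/conductor1.
have [c c0 Pc] := exists_denominator w.
have [p0 Pp0 [u p0w nPu]] : exists2 p0, conductor w p0 &
    exists2 u, p0%:F * w = u%:F & ~ conductor w u.
  apply: NNPP => stable; apply: nw.
  apply: (in_ring_of_mul_stable (Q := conductor w) c0 Pc) => x Px.
  have [s xw] := Px; exists s => //; apply: NNPP => nPs.
  by apply: stable; exists x => //; exists s.
have swap x s : x%:F * w = s%:F -> x * u = s * p0.
  by move=> xw; apply: tofrac_inj; rewrite !tofracM -xw -p0w mulrAC mulrA.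
split => //; first by exists c; split.
move=> Q [[Q0 QD QM] nQ1 Qpr] QP [q [q0 Qq]].
have Qp0 : Q p0.
  apply: NNPP => nQp0; apply: nw; apply: (in_ring_of_mul_stable q0 Qq) => x Qx.
  have [s xw] := QP x Qx; exists s => //.
  have : Q (s * p0) by rewrite -(swap _ _ xw) mulrC; apply: QM.
  by case/Qpr.
move=> x [s xw].
have : Q (x * u) by rewrite (swap _ _ xw); apply: QM.
by case/Qpr => // /QP.
Qed.

Lemma krull_criterion (G : R -> Prop) z :
  (forall P, is_height1_prime P -> exists x, G x /\ ~ P x) ->
  (forall x, G x -> exists m, in_ring ((x ^+ m)%:F * z)) -> in_ring z.
Proof.
move=> hG hz; apply: NNPP => nz.
have [t Cprime] := exists_prime_conductor nz.
have [x [Gx nPx]] := hG _ (prime_conductor_height1 Cprime).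
have [m /(conductor_mulr t) Pxm] := hz x Gx.
have [_ nP1 Ppr] := Cprime.
elim: m Pxm => [|m IH]; first by rewrite expr0.
by rewrite exprS => /Ppr [].
Qed.

End KrullCriterion.

Section SubringDerivation.
Variable R : idomainType.

Definition is_subring (S : R -> Prop) : Prop :=
  [/\ S 1, forall x y, S x -> S y -> S (x - y) & forall x y, S x -> S y -> S (x * y)].

Variable S : R -> Prop.
Hypothesis hS : is_subring S.

Lemma subringB x y : S x -> S y -> S (x - y).
Proof. by case: hS => _ + _; apply. Qed.

Lemma subring0 : S 0.
Proof. by case: hS => S1 _ _; rewrite -(subrr 1); apply: subringB. Qed.

Lemma subringN x : S x -> S (- x).
Proof. by move=> Sx; rewrite -sub0r; apply: subringB => //; apply: subring0. Qed.

Lemma subringD x y : S x -> S y -> S (x + y).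
Proof. by move=> Sx Sy; rewrite -[y]opprK; apply: subringB => //; apply: subringN. Qed.

Lemma subringM x y : S x -> S y -> S (x * y).
Proof. by case: hS => _ _; apply. Qed.

Lemma subringMn x n : S x -> S (x *+ n).
Proof.
move=> Sx; elim: n => [|n IH]; first by rewrite mulr0n; apply: subring0.
by rewrite mulrS; apply: subringD.
Qed.

Lemma subringX x n : S x -> S (x ^+ n).
Proof.
move=> Sx; elim: n => [|n IH]; first by rewrite expr0; case: hS.
by rewrite exprS; apply: subringM.
Qed.

Lemma subring_sum (I : Type) (r : seq I) (F : I -> R) :
  (forall i, S (F i)) -> S (\sum_(i <- r) F i).
Proof.
move=> SF; elim: r => [|i r IH]; first by rewrite big_nil; apply: subring0.
by rewrite big_cons; apply: subringD.
Qed.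

Variable f : R -> R.
Hypothesis hf : is_derivation_on S f.

Lemma der_in x : S x -> S (f x). Proof. by case: hf => + _ _; apply. Qed.

Lemma derD x y : S x -> S y -> f (x + y) = f x + f y.
Proof. by case: hf => _ + _; apply. Qed.

Lemma derM x y : S x -> S y -> f (x * y) = f x * y + x * f y.
Proof. by case: hf => _ _; apply. Qed.

Lemma der0 : f 0 = 0.
Proof. by apply: (addrI (f 0)); rewrite -derD ?addr0 //; apply: subring0. Qed.

Lemma derN x : S x -> f (- x) = - f x.
Proof. by move=> Sx; apply: (addrI (f x)); rewrite -derD ?subrr ?der0 //; apply: subringN. Qed.

Lemma derB x y : S x -> S y -> f (x - y) = f x - f y.
Proof. by move=> Sx Sy; rewrite derD ?derN //; apply: subringN. Qed.

Lemma derMn x n : S x -> f (x *+ n) = f x *+ n.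
Proof.
move=> Sx; elim: n => [|n IH]; first by rewrite !mulr0n der0.
by rewrite !mulrS derD ?IH //; apply: subringMn.
Qed.

Lemma der_sum (I : Type) (r : seq I) (F : I -> R) :
  (forall i, S (F i)) -> f (\sum_(i <- r) F i) = \sum_(i <- r) f (F i).
Proof.
move=> SF; elim: r => [|i r IH]; first by rewrite !big_nil der0.
by rewrite !big_cons derD ?IH //; apply: subring_sum.
Qed.

Lemma derX x n : S x -> f (x ^+ n.+1) = (x ^+ n * f x) *+ n.+1.
Proof.
move=> Sx; elim: n => [|n IH]; first by rewrite expr0 mul1r.
have Sxn := subringX n.+1 Sx.
by rewrite [in LHS]exprS derM // IH mulrnAr mulrA -exprS mulrC -mulrS.
Qed.

Lemma der1 : f 1 = 0.
Proof.
have S1 : S 1 by case: hS.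
have := derM S1 S1; rewrite !mul1r mulr1 => f1.
by apply: (addrI (f 1)); rewrite -f1 addr0.
Qed.

Lemma iter_der_in n x : S x -> S (iter n f x).
Proof. by move=> Sx; elim: n => //= n IH; apply: der_in. Qed.

Lemma iter_der0 n : iter n f 0 = 0.
Proof. by elim: n => //= n ->; apply: der0. Qed.

Lemma iter_derD n x y : S x -> S y -> iter n f (x + y) = iter n f x + iter n f y.
Proof. by move=> Sx Sy; elim: n => //= n ->; apply: derD; apply: iter_der_in. Qed.

Lemma iter_derB n x y : S x -> S y -> iter n f (x - y) = iter n f x - iter n f y.
Proof. by move=> Sx Sy; elim: n => //= n ->; apply: derB; apply: iter_der_in. Qed.

Lemma iter_derMn n x m : S x -> iter n f (x *+ m) = iter n f x *+ m.
Proof. by move=> Sx; elim: n => //= n ->; apply: derMn; apply: iter_der_in. Qed.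

Lemma iter_der_eq0_le n m x : iter n f x = 0 -> (n <= m)%N -> iter m f x = 0.
Proof. by move=> fnx /subnK <-; rewrite iterD fnx iter_der0. Qed.

Lemma iter_derM n x y : S x -> S y -> iter n f (x * y) =
  \sum_(0 <= k < n.+1) (iter k f x * iter (n - k) f y) *+ 'C(n, k).
Proof.
move=> Sx Sy; elim: n => [|n IH]; first by rewrite big_nat1 mulr1n.
have Sxy i j : S (iter i f x * iter j f y) by apply: subringM; apply: iter_der_in.
have der_xy i j : f (iter i f x * iter j f y) =
    iter i.+1 f x * iter j f y + iter i f x * iter j.+1 f y :=
  derM (iter_der_in i Sx) (iter_der_in j Sy).
rewrite iterS IH der_sum; last by move=> k; apply/subringMn/Sxy.
under eq_bigr do rewrite derMn // der_xy mulrnDl.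
rewrite big_split [in RHS]big_nat_recl // subn0 bin0 mulr1n.
under [in RHS]eq_bigr do rewrite subSS binS mulrnDr.
rewrite big_split [in RHS]addrA [in RHS]addrC; congr (_ + _).
rewrite [LHS]big_nat_recl // [in RHS]big_nat_recr // subn0 bin0 mulr1n.
rewrite bin_small // mulr0n Monoid.mulm1; congr (_ + _).
by apply: eq_big_nat => k /andP[_ kn]; rewrite subnSK.
Qed.

Lemma iter_derM_eq0 p q x y : S x -> S y -> iter p f x = 0 -> iter q f y = 0 ->
  iter (p + q).-1 f (x * y) = 0.
Proof.
move=> Sx Sy fpx fqy; rewrite iter_derM // big_nat big1 // => k /andP[_ k_le].
have [kp|pk] := ltnP k p; last by rewrite (iter_der_eq0_le fpx pk) mul0r mul0rn.
by rewrite (iter_der_eq0_le fqy) ?mulr0 ?mul0rn //; move: k_le; rewrite -subn1; lia.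
Qed.

Lemma iter_derM_top q s x y : S x -> S y -> iter q.+1 f x = 0 -> iter s.+1 f y = 0 ->
  iter (q + s) f (x * y) = (iter q f x * iter s f y) *+ 'C(q + s, q).
Proof.
move=> Sx Sy fqx fsy; rewrite iter_derM // (bigD1_seq q) ?iota_uniq //=; last first.
  by rewrite mem_iota; lia.
rewrite addKn big1 ?addr0 // => k kq.
have [k_lt|q_lt] := ltnP k q.
  by rewrite (iter_der_eq0_le fsy) ?mulr0 ?mul0rn //; lia.
by rewrite (iter_der_eq0_le fqx) ?mul0r ?mul0rn //; rewrite ltn_neqAle eq_sym kq.
Qed.

Section NilpotentDerivation.
Hypothesis hchar : char0 R.
Hypothesis hLN : locally_nilpotent_on S f.

Lemma exists_nil_index x : S x -> x != 0 ->
  exists n, iter n.+1 f x = 0 /\ iter n f x != 0.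
Proof.
move=> Sx x0; have [n] := hLN Sx.
elim: n => [|n IH] /= fnx; first by rewrite fnx eqxx in x0.
by have [/IH|] := eqVneq (iter n f x) 0; last exists n.
Qed.

(* In the fraction field, [y' = a ^ c * f (a ^ (- c) * y)] with [c = m' / m]. *)
Lemma iter_der_pred_eq0 a y y' p m m' : (0 < m)%N -> S a -> a != 0 -> S y -> S y' ->
  iter p.+1 f y = 0 -> (a * y') *+ m = (a * f y) *+ m - (y * f a) *+ m' ->
  iter p f y' = 0.
Proof.
move=> m_gt0 Sa a0 Sy Sy' fpy y'E.
have Sfa := der_in Sa; have Sfy := der_in Sy.
have [q [fqa fqa0]] := exists_nil_index Sa a0.
have fpfy : iter p f (f y) = 0 by rewrite -iterSr.
have fqfa : iter q f (f a) = 0 by rewrite -iterSr.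
have h1 := iter_derM_eq0 Sa Sfy fqa fpfy.
have h2 := iter_derM_eq0 Sy Sfa fpy fqfa.
rewrite addSn /= in h1; rewrite addSn addnC /= in h2.
have fay' : iter (q + p) f (a * y') = 0.
  have Say' := subringM Sa Sy'.
  have Safy := subringM Sa Sfy; have Syfa := subringM Sy Sfa.
  have := subringMn m Safy; have := subringMn m' Syfa; move=> S2 S1.
  apply/eqP; rewrite -(char0_mulrn_eq0 _ hchar m_gt0) -iter_derMn //.
  by rewrite y'E iter_derB // !iter_derMn // h1 h2 !mul0rn subrr.
apply: contraTeq isT => fpy'.
have y'0 : y' != 0 by apply: contraNneq fpy' => ->; rewrite iter_der0.
have [s [fsy' fsy'0]] := exists_nil_index Sy' y'0.
have ps : (p <= s)%N by rewrite leqNgt; apply: contra fpy' => /(iter_der_eq0_le fsy') ->.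
have := iter_derM_top Sa Sy' fqa fsy'.
rewrite (iter_der_eq0_le fay') ?leq_add2l // => /esym/eqP.
by rewrite char0_mulrn_eq0 ?bin_gt0 ?leq_addr // mulf_eq0 (negbTE fqa0) (negbTE fsy'0).
Qed.

End NilpotentDerivation.

End SubringDerivation.

Lemma subring_setT (R : idomainType) : is_subring (fun _ : R => True).
Proof. by []. Qed.
Arguments subring_setT {R}.

Lemma derivation_on_setT (R : idomainType) (f : R -> R) :
  is_derivation f -> is_derivation_on (fun=> True) f.
Proof. by case=> fD fM; split=> [//|x y _ _|x y _ _]; [apply: fD | apply: fM]. Qed.

Lemma derivation_pow_identity (R : idomainType) (D : R -> R) u w n : is_derivation D ->
  (u ^+ n.+2 * (D w * u ^+ n.+1)) *+ n.+2 =
  (u ^+ n.+2 * D (w * u ^+ n.+1)) *+ n.+2 - (w * u ^+ n.+1 * D (u ^+ n.+2)) *+ n.+1.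
Proof.
move=> /derivation_on_setT hD.
rewrite (derM hD) // !(derX subring_setT hD) // !exprS.
set U := u ^+ n; set Du := D u; set Dw := D w.
ring.
Qed.

Section GradedRing.
Variable B : idomainType.
Variable comp : int -> B -> B.
Hypothesis hgr : is_Zgrading comp.
Implicit Types (u v w x y z : B) (i j : int).

Lemma comp_is_zmod_morphism i : zmod_morphism (comp i).
Proof. case: hgr => compD _ _ _ x y; by rewrite -{2}(subrK y x) (compD _ (x - y)) addrK. Qed.

HB.instance Definition _ i :=
  GRing.isZmodMorphism.Build B B (comp i) (comp_is_zmod_morphism i).

Lemma compK i j x : comp i (comp j x) = if i == j then comp j x else 0.
Proof. by case: hgr. Qed.

Lemma homogM i j x y : homog comp i x -> homog comp j y -> homog comp (i + j) (x * y).
Proof. by case: hgr => _ _ _; apply. Qed.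

Lemma homog_comp i x : homog comp i (comp i x).
Proof. by rewrite /homog compK eqxx. Qed.

Lemma comp_homog_neq i j x : homog comp j x -> i != j -> comp i x = 0.
Proof. by rewrite /homog => <- /negbTE ij; rewrite compK ij. Qed.

Lemma homogD i x y : homog comp i x -> homog comp i y -> homog comp i (x + y).
Proof. by rewrite /homog raddfD /= => -> ->. Qed.

Lemma homogN i x : homog comp i x -> homog comp i (- x).
Proof. by rewrite /homog raddfN /= => ->. Qed.

Definition covers x (s : seq int) := uniq s /\ forall i, comp i x != 0 -> i \in s.

Lemma exists_covers x : exists s, covers x s.
Proof.
case: hgr => _ /(_ x) [s [s_supp _]] _ _; exists (undup s); split; first exact: undup_uniq.
by move=> i; rewrite mem_undup; apply: contraR => /s_supp ->.
Qed.

Definition supp x : seq int := epsilon (inhabits [::]) (covers x).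

Lemma covers_supp x : covers x (supp x).
Proof. by apply: epsilon_spec; apply: exists_covers. Qed.

Lemma comp_decomp x s : covers x s -> x = \sum_(i <- s) comp i x.
Proof.
case: hgr => _ /(_ x) [s' [s'_supp xE]] _ _ [s_uniq s_supp].
rewrite {1}xE; apply: eq_big_uniq_support => //; first exact: undup_uniq.
by move=> i; rewrite mem_undup; apply: contraR => /s'_supp ->.
Qed.

Lemma covers_homog i x : homog comp i x -> covers x [:: i].
Proof.
rewrite /covers.
by move=> xi; split=> // j; rewrite inE; apply: contraR => /(comp_homog_neq xi) ->.
Qed.

Lemma comp_mulr_homog l e z h : homog comp e h -> comp (l + e) (z * h) = comp l z * h.
Proof.
move=> he; have [s zs] := exists_covers z; have [s_uniq s_supp] := zs.
rewrite {1}(comp_decomp zs) mulr_suml raddf_sum /=.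
rewrite (eq_bigr (fun i => if i == l then comp i z * h else 0)) -?big_mkcond /=; last first.
  move=> i _; have hi := homogM (homog_comp i z) he.
  case: eqP => [<- //|/eqP il]; apply: (comp_homog_neq hi).
  by apply: contra il => /eqP /addIr ->.
have [ls|ls] := boolP (l \in s).
  by rewrite -big_filter (filter_pred1_uniq s_uniq ls) big_seq1.
rewrite big_seq_cond big1 => [|i /andP[i_s /eqP il]]; last by rewrite il (negbTE ls) in i_s.
have /eqP -> : comp l z == 0 by apply: contraNT ls => /s_supp.
by rewrite mul0r.
Qed.

Lemma homog1 : homog comp 0 1.
Proof.
have [i c1i] : exists i, comp i 1 != 0.
  apply: NNPP => none; have [s s1] := exists_covers 1; move: (oner_neq0 B).
  rewrite {1}(comp_decomp s1) big1 ?eqxx // => i _.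
  by apply/eqP/negbNE/negP => c1i; apply: none; exists i.
have := comp_mulr_homog 0 1 (homog_comp i 1).
rewrite add0r mul1r (homog_comp i 1) => c1iE.
by apply: (mulIf c1i); rewrite mul1r.
Qed.

Lemma homogX i x n : homog comp i x -> homog comp (i * n%:Z) (x ^+ n).
Proof.
move=> xi; elim: n => [|n IH]; first by rewrite mulr0 expr0; apply: homog1.
by rewrite exprS -addn1 PoszD mulrDr mulr1 addrC; apply: homogM.
Qed.

Section Veronese.
Variable d : nat.
Local Notation V := (in_veronese comp d).

Lemma veronese_homog i x : homog comp i x -> (d%:Z %| i)%Z -> V x.
Proof.
by move=> xi di j nj; apply: (comp_homog_neq xi); apply: contraNneq nj => ->.
Qed.

Lemma veronese_comp i x : V x -> V (comp i x).
Proof.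
move=> Vx; have [di|ndi] := boolP (d%:Z %| i)%Z; first exact: veronese_homog (homog_comp i x) di.
by rewrite Vx //; apply: veronese_homog (dvdz0 _); rewrite /homog raddf0.
Qed.

Lemma veronese_mul x y : V x -> V y -> V (x * y).
Proof.
move=> Vx Vy l nl; have [s ys] := exists_covers y.
rewrite (comp_decomp ys) mulr_sumr raddf_sum big1 //= => j _.
rewrite -(subrK j l) comp_mulr_homog; last exact: homog_comp.
have [dj|ndj] := boolP (d%:Z %| j)%Z; last by rewrite Vy ?mulr0.
by rewrite Vx ?mul0r //; apply: contra nl => dlj; rewrite -(subrK j l); apply: rpredD.
Qed.

Lemma veronese_subring : is_subring V.
Proof.
split; first exact: veronese_homog homog1 (dvdz0 _).
  by move=> x y Vx Vy i ni; rewrite raddfB /= Vx ?Vy ?subrr.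
exact: veronese_mul.
Qed.

Lemma veronese_powd i u : homog comp i u -> V (u ^+ d).
Proof. by move=> ui; apply: veronese_homog (homogX d ui) _; rewrite mulrC dvdz_mulr. Qed.

Lemma veronese_pow_predM i w u : (0 < d)%N ->
  homog comp i w -> homog comp i u -> V (w ^+ d.-1 * u).
Proof.
move=> d_gt0 wi ui; apply: veronese_homog (homogM (homogX d.-1 wi) ui) _.
by rewrite -[X in _ + X]mulr1 -mulrDr -PoszD addn1 prednK // mulrC dvdz_mulr.
Qed.

Lemma veronese_cancel_homog e z h : homog comp e h -> h != 0 -> V h -> V (z * h) -> V z.
Proof.
move=> he h0 Vh Vzh i ni; apply/eqP; rewrite -(mulIr_eq0 _ (mulIf h0)).
rewrite -(comp_mulr_homog i z he); apply/eqP/Vzh; apply: contra ni => die.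
have de : (d%:Z %| e)%Z.
  by apply: contraR h0 => nde; rewrite -[h]he Vh.
by rewrite -(addrK e i); apply: rpredB.
Qed.

Lemma veronese_cancel_mulrn z n : char0 B -> (0 < n)%N -> V (z *+ n) -> V z.
Proof.
move=> hchar n_gt0 Vzn i ni; apply/eqP.
by rewrite -(char0_mulrn_eq0 _ hchar n_gt0) -raddfMn /= Vzn.
Qed.

Lemma derivation_eq_on_veronese D1 D2 : char0 B -> (0 < d)%N ->
  is_derivation D1 -> is_derivation D2 -> (forall x, V x -> D1 x = D2 x) ->
  forall x, D1 x = D2 x.
Proof.
move=> hchar d_gt0 /derivation_on_setT hD1 /derivation_on_setT hD2 agree x.
have homog_eq i u : homog comp i u -> D1 u = D2 u.
  move=> ui; have [->|u0] := eqVneq u 0.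
    by rewrite (der0 subring_setT hD1) (der0 subring_setT hD2).
  have := agree _ (veronese_powd ui).
  rewrite -(prednK d_gt0) (derX subring_setT hD1) ?(derX subring_setT hD2) // => /eqP.
  rewrite -subr_eq0 -mulrnBl char0_mulrn_eq0 // -mulrBr mulf_eq0 expf_eq0.
  by rewrite (negbTE u0) andbF subr_eq0 => /eqP.
have [s xs] := exists_covers x.
rewrite (comp_decomp xs) (der_sum subring_setT hD1) ?(der_sum subring_setT hD2) //.
by apply: eq_bigr => i _; apply: homog_eq (homog_comp i x).
Qed.

Section Extension.
Hypothesis hchar : char0 B.
Hypothesis d_gt1 : (1 < d)%N.
Variable delta : B -> B.
Hypothesis hdelta : is_derivation_on V delta.
Local Notation F := {fraction B}.
Let hV : is_subring V := veronese_subring.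

Let d_gt0 : (0 < d)%N := ltnW d_gt1.
Let dE : d = d.-1.+1 := esym (prednK d_gt0).

(* The value forced on [D u] for homogeneous [u] by [D (u ^+ d) = d u ^+ d.-1 D u],
   as [u ^+ d] lies in B^(d). *)
Definition der_hom u : F := (delta (u ^+ d))%:F / (d%:R * u%:F ^+ d.-1).

Lemma der_hom_den_neq0 u : u != 0 -> d%:R * u%:F ^+ d.-1 != 0 :> F.
Proof.
move=> u0; rewrite mulf_neq0 ?expf_neq0 ?tofrac_eq0 //.
by rewrite -(tofrac1 B) -tofracMn tofrac_eq0 dE hchar.
Qed.

Lemma der_homE u : u != 0 -> d%:R * u%:F ^+ d.-1 * der_hom u = (delta (u ^+ d))%:F.
Proof. by move=> u0; rewrite mulrC divfK // der_hom_den_neq0. Qed.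

Lemma der_hom0 : der_hom 0 = 0.
Proof. by rewrite /der_hom expr0n gtn_eqF // (der0 hV hdelta) tofrac0 mul0r. Qed.

Lemma der_hom_veronese w : V w -> der_hom w = (delta w)%:F.
Proof.
move=> Vw; have [->|w0] := eqVneq w 0; first by rewrite der_hom0 (der0 hV hdelta) tofrac0.
apply: (mulfI (der_hom_den_neq0 w0)); rewrite der_homE //.
by rewrite [in LHS]dE (derX hV hdelta) // -dE tofracMn tofracM tofracXn -mulrA mulr_natl.
Qed.

Lemma der_hom_powM u v i j : homog comp i u -> homog comp j v -> u != 0 -> v != 0 ->
  (delta (u ^+ d * v ^+ d))%:F =
  d%:R * (u%:F * v%:F) ^+ d.-1 * (der_hom u * v%:F + u%:F * der_hom v).
Proof.
move=> ui vj u0 v0.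
rewrite (derM hdelta (veronese_powd ui) (veronese_powd vj)).
rewrite tofracD !tofracM -(der_homE u0) -(der_homE v0) !tofracXn dE /= !exprSr exprMn.
set Eu := der_hom u; set Ev := der_hom v; set U := u%:F; set W := v%:F.
ring.
Qed.

Lemma der_hom_Leibniz u v i j : homog comp i u -> homog comp j v -> V (u * v) ->
  (delta (u * v))%:F = der_hom u * v%:F + u%:F * der_hom v.
Proof.
move=> ui vj Vuv.
have [->|u0] := eqVneq u 0; first by rewrite mul0r (der0 hV hdelta) tofrac0 der_hom0 !mul0r addr0.
have [->|v0] := eqVneq v 0; first by rewrite mulr0 (der0 hV hdelta) tofrac0 der_hom0 !mulr0 addr0.
apply: (mulfI (der_hom_den_neq0 (mulf_neq0 u0 v0))).
rewrite tofracM -(der_hom_powM ui vj) // -exprMn [in RHS]dE (derX hV hdelta) // -dE.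
by rewrite tofracMn tofracM tofracXn -tofracM -mulrA mulr_natl.
Qed.

Lemma der_homM u v i j : homog comp i u -> homog comp j v ->
  der_hom (u * v) = der_hom u * v%:F + u%:F * der_hom v.
Proof.
move=> ui vj.
have [->|u0] := eqVneq u 0; first by rewrite mul0r tofrac0 der_hom0 !mul0r addr0.
have [->|v0] := eqVneq v 0; first by rewrite mulr0 tofrac0 der_hom0 !mulr0 addr0.
apply: (mulfI (der_hom_den_neq0 (mulf_neq0 u0 v0))).
by rewrite der_homE ?mulf_neq0 // tofracM -(der_hom_powM ui vj) // -exprMn.
Qed.

Lemma der_homN u i : homog comp i u -> der_hom (- u) = - der_hom u.
Proof.
move=> ui; have V1 : V 1 by case: hV.
rewrite -mulrN1 (der_homM ui (homogN homog1)) (der_hom_veronese (subringN hV V1)).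
by rewrite (derN hV hdelta V1) (der1 hV hdelta) oppr0 tofrac0 mulr0 addr0 tofracN tofrac1 mulrN1.
Qed.

Lemma der_homD u v i : homog comp i u -> homog comp i v ->
  der_hom (u + v) = der_hom u + der_hom v.
Proof.
move=> ui vi; have wi := homogD ui vi.
have [w0|w_neq0] := eqVneq (u + v) 0.
  have -> : v = - u by apply/eqP; rewrite -addr_eq0 addrC w0.
  by rewrite subrr der_hom0 (der_homN ui) subrr.
have Vwu := veronese_pow_predM d_gt0 wi ui; have Vwv := veronese_pow_predM d_gt0 wi vi.
have := congr1 (@FracField.tofrac B) (derD hdelta Vwu Vwv).
have wn := homogX d.-1 wi.
rewrite -mulrDr tofracD (der_hom_Leibniz wn ui Vwu) (der_hom_Leibniz wn vi Vwv).
rewrite (der_hom_Leibniz wn wi (veronese_pow_predM d_gt0 wi wi)) tofracD.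
set a := der_hom _; set P := (_ ^+ _)%:F => sumE.
apply: (mulfI (_ : P != 0)); first by rewrite tofrac_eq0 expf_neq0.
apply: (addrI (a * (u%:F + v%:F))); rewrite sumE.
set U := u%:F; set W := v%:F; set Eu := der_hom u; set Ev := der_hom v.
ring.
Qed.

Definition der_frac x : F := \sum_(i <- supp x) der_hom (comp i x).

Lemma der_frac_covers x s : covers x s -> der_frac x = \sum_(i <- s) der_hom (comp i x).
Proof.
case: (covers_supp x) => u1 h1 [u2 h2]; apply: eq_big_uniq_support => // i.
- by move=> hi; apply: h1; apply: contraNneq hi => ->; rewrite der_hom0.
- by move=> hi; apply: h2; apply: contraNneq hi => ->; rewrite der_hom0.
Qed.

Lemma der_frac_homog i u : homog comp i u -> der_frac u = der_hom u.
Proof. by move=> ui; rewrite (der_frac_covers (covers_homog ui)) big_seq1 ui. Qed.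

Lemma der_frac_decomp x s : covers x s -> der_frac x = \sum_(i <- s) der_frac (comp i x).
Proof.
move=> xs; rewrite (der_frac_covers xs); apply: eq_bigr => i _.
by rewrite (der_frac_homog (homog_comp i x)).
Qed.

Lemma der_fracD x y : der_frac (x + y) = der_frac x + der_frac y.
Proof.
set s := undup (supp x ++ supp y).
have cov z : (forall i, comp i z != 0 -> i \in supp x ++ supp y) -> covers z s.
  by move=> hz; split=> [|i /hz]; rewrite ?undup_uniq ?mem_undup.
have [_ hx] := covers_supp x; have [_ hy] := covers_supp y.
have cx : covers x s by apply: cov => i /hx; rewrite mem_cat => ->.
have cy : covers y s by apply: cov => i /hy; rewrite mem_cat orbC => ->.
have cxy : covers (x + y) s.
  apply: cov => i; rewrite raddfD /= mem_cat.
  by have [/eqP->|/hx->//] := boolP (comp i x == 0); rewrite add0r => /hy ->; rewrite orbT.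
rewrite (der_frac_covers cxy) (der_frac_covers cx) (der_frac_covers cy) -big_split.
by apply: eq_bigr => i _; rewrite raddfD /= (der_homD (homog_comp i x) (homog_comp i y)).
Qed.

Lemma der_frac_sum (I : Type) (r : seq I) (G : I -> B) :
  der_frac (\sum_(j <- r) G j) = \sum_(j <- r) der_frac (G j).
Proof.
elim: r => [|j r IH]; last by rewrite !big_cons der_fracD IH.
have h0 : homog comp 0 0 by rewrite /homog raddf0.
by rewrite !big_nil (der_frac_homog h0) der_hom0.
Qed.

Lemma der_fracM x y : der_frac (x * y) = der_frac x * y%:F + x%:F * der_frac y.
Proof.
have [s xs] := exists_covers x; have [t yt] := exists_covers y.
have -> : x * y = \sum_(i <- s) \sum_(j <- t) comp i x * comp j y.
  by rewrite {1}(comp_decomp xs) {1}(comp_decomp yt) mulr_suml; under eq_bigr do rewrite mulr_sumr.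
have tofrac_decomp z r : covers z r -> z%:F = \sum_(i <- r) (comp i z)%:F.
  by move=> zr; rewrite {1}(comp_decomp zr) raddf_sum.
rewrite (tofrac_decomp _ _ xs) (tofrac_decomp _ _ yt).
rewrite (der_frac_decomp xs) (der_frac_decomp yt) der_frac_sum !mulr_suml -big_split.
apply: eq_bigr => i _; rewrite der_frac_sum !mulr_sumr -big_split; apply: eq_bigr => j _.
have xi := homog_comp i x; have yj := homog_comp j y.
by rewrite (der_frac_homog (homogM xi yj)) (der_homM xi yj) (der_frac_homog xi) (der_frac_homog yj).
Qed.

Lemma der_frac_veronese x : V x -> der_frac x = (delta x)%:F.
Proof.
move=> Vx; have [s xs] := exists_covers x.
rewrite (der_frac_covers xs) {2}(comp_decomp xs) (der_sum hV hdelta); last first.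
  by move=> i; apply: veronese_comp.
rewrite raddf_sum /=; apply: eq_bigr => i _.
by rewrite der_hom_veronese //; apply: veronese_comp.
Qed.

Section Integrality.
Hypothesis hnoeth : noetherian_ring B.
Hypothesis hnorm : normal_domain B.
Hypothesis hdunit : (d%:R : B) \is a GRing.unit.
Hypothesis hX : forall P : B -> Prop, is_height1_prime P ->
  exists x, in_Xd comp d x /\ ~ P x.

Lemma in_ring_der_hom x : in_ring (x%:F ^+ d.-1 * der_hom x).
Proof.
have [->|x0] := eqVneq x 0; first by rewrite der_hom0 mulr0; exists 0; rewrite tofrac0.
exists ((d%:R)^-1 * delta (x ^+ d)).
have dVd : ((d%:R)^-1 : B)%:F * d%:R = 1.
  by rewrite -(tofrac1 B) -tofracMn -tofracM mulVr.
by rewrite tofracM -(der_homE x0) !mulrA dVd mul1r.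
Qed.

Lemma in_ring_der_frac_pow x i n : homog comp i x ->
  in_ring (x%:F ^+ (n * d.-1) * der_frac (x ^+ n)).
Proof.
move=> xi; elim: n => [|n IH].
  have V1 : V 1 by case: hV.
  by rewrite expr0 der_frac_veronese // (der1 hV hdelta) tofrac0 mulr0; exists 0; rewrite tofrac0.
rewrite exprS der_fracM mulSn exprD (der_frac_homog xi).
set E := der_hom x; set En := der_frac _; set X := x%:F.
have -> : X ^+ d.-1 * X ^+ (n * d.-1) * (E * (x ^+ n)%:F + X * En) =
    (X ^+ d.-1 * E) * (X ^+ (n * d.-1) * (x ^+ n)%:F) +
    (X * X ^+ d.-1) * (X ^+ (n * d.-1) * En) by ring.
apply: in_ringD; apply: in_ringM => //; first exact: in_ring_der_hom.
  by rewrite /X -tofracXn -tofracM; apply: in_ring_tofrac.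
by rewrite /X -tofracXn -tofracM; apply: in_ring_tofrac.
Qed.

Lemma in_ring_der_frac_homog u j : homog comp j u -> in_ring (der_frac u).
Proof.
move=> uj; apply: (krull_criterion hnoeth hnorm hX) => x [x0 [i [xi cop]]].
have [k dk] := coprimez_dvdz_addM j d_gt0 cop.
have Vuxk : V (u * x ^+ k).
  by apply: veronese_homog (homogM uj (homogX k xi)) _; rewrite mulrC.
have := der_frac_veronese Vuxk; rewrite der_fracM => uxkE.
exists (k * d.-1 + k)%N.
have -> : (x ^+ (k * d.-1 + k))%:F * der_frac u =
    (x ^+ (k * d.-1))%:F * (delta (u * x ^+ k))%:F -
    u%:F * (x%:F ^+ (k * d.-1) * der_frac (x ^+ k)).
  by rewrite -uxkE !tofracXn exprD; ring.
apply: in_ringB; apply: in_ringM; try exact: in_ring_tofrac.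
exact: in_ring_der_frac_pow xi.
Qed.

Lemma in_ring_der_frac x : in_ring (der_frac x).
Proof.
have [s xs] := exists_covers x; rewrite (der_frac_decomp xs).
by apply: in_ring_sum => i; apply: in_ring_der_frac_homog (homog_comp i x).
Qed.

Definition der_ext x : B := epsilon (inhabits 0) (fun b => b%:F = der_frac x).

Lemma der_extE x : (der_ext x)%:F = der_frac x.
Proof.
apply: (epsilon_spec (inhabits 0) (fun b => b%:F = der_frac x)).
by case: (in_ring_der_frac x) => b ->; exists b.
Qed.

Lemma der_ext_derivation : is_derivation der_ext.
Proof.
by split=> x y; apply: tofrac_inj; rewrite ?tofracD ?tofracM !der_extE ?der_fracD ?der_fracM.
Qed.

Lemma der_ext_veronese x : V x -> der_ext x = delta x.
Proof. by move=> Vx; apply: tofrac_inj; rewrite der_extE der_frac_veronese. Qed.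

Section Nilpotency.
Hypothesis hLN : locally_nilpotent_on V delta.
Let hD := derivation_on_setT der_ext_derivation.

Lemma der_ext_nilpotent_homog u i : homog comp i u -> exists n, iter n der_ext u = 0.
Proof.
move=> ui; have [->|u0] := eqVneq u 0; first by exists 0%N.
pose a := u ^+ d; pose y n := iter n der_ext u * u ^+ d.-1.
have Va : V a := veronese_powd ui.
have a0 : a != 0 by rewrite expf_neq0.
have dE2 : d.-2.+2 = d by case: (d) d_gt1 => [|[]].
have dE1 : d.-2.+1 = d.-1 by rewrite -dE2.
have rel n : V (y n) ->
    (a * y n.+1) *+ d = (a * delta (y n)) *+ d - (y n * delta a) *+ d.-1.
  move=> Vyn; rewrite -(der_ext_veronese Vyn) -(der_ext_veronese Va).
  have := derivation_pow_identity u (iter n der_ext u) d.-2 der_ext_derivation.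
  by rewrite dE2 dE1 => idE; exact: idE.
have Vy n : V (y n).
  elim: n => [|n IH]; first by rewrite /y /= -exprS -dE.
  have : V ((a * y n.+1) *+ d).
    rewrite rel //; apply: (subringB hV); apply: (subringMn hV); apply: (subringM hV) => //;
      exact: (der_in hdelta).
  move/(veronese_cancel_mulrn hchar d_gt0) => Vay.
  by apply: (veronese_cancel_homog (homogX d ui) a0 Va); rewrite mulrC.
have [p0 fp0] := hLN (Vy 0%N).
have nil_y n : (n <= p0)%N -> iter (p0 - n) delta (y n) = 0.
  elim: n => [|n IH] np; first by rewrite subn0.
  apply: (iter_der_pred_eq0 hV hdelta hchar hLN d_gt0 Va a0 (Vy n) (Vy n.+1) _ (rel n (Vy n))).
  by rewrite subnSK // IH // ltnW.
exists p0; have /eqP := nil_y p0 (leqnn p0).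
by rewrite subnn mulf_eq0 expf_eq0 (negbTE u0) andbF orbF => /eqP.
Qed.

Lemma der_ext_nilpotent : locally_nilpotent_on (fun=> True) der_ext.
Proof.
move=> x _; have [s xs] := exists_covers x; rewrite (comp_decomp xs).
elim: s {xs} => [|j s [n2 fn2]]; first by exists 0%N; rewrite big_nil.
have [n1 fn1] := der_ext_nilpotent_homog (homog_comp j x).
exists (n1 + n2)%N; rewrite big_cons (iter_derD hD) //.
rewrite (iter_der_eq0_le subring_setT hD fn1 (leq_addr _ _)).
by rewrite (iter_der_eq0_le subring_setT hD fn2 (leq_addl _ _)) addr0.
Qed.

End Nilpotency.
End Integrality.
End Extension.
End Veronese.
End GradedRing.

Theorem lemma3p9 (B : idomainType) (comp : int -> B -> B) (d : nat)
  (hgr : is_Zgrading comp) (hnoeth : noetherian_ring B) (hnorm : normal_domain B)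
  (hchar : char0 B) (he : e_eq1 comp)
  (hd : (2 <= d)%N) (hdunit : (d%:R : B) \is a GRing.unit)
  (hX : forall P : B -> Prop, is_height1_prime P ->
          exists x, in_Xd comp d x /\ ~ P x)
  (delta : B -> B) (hdelta : is_derivation_on (in_veronese comp d) delta) :
  exists D : B -> B,
    [/\ is_derivation D,
        (forall x, in_veronese comp d x -> D x = delta x),
        (forall D' : B -> B, is_derivation D' ->
            (forall x, in_veronese comp d x -> D' x = delta x) -> forall x, D' x = D x) &
        (locally_nilpotent_on (in_veronese comp d) delta ->
            locally_nilpotent_on (fun _ => True) D)].
Proof.
have hD := der_ext_derivation hgr hchar hd hdelta hnoeth hnorm hdunit hX.
have extends := der_ext_veronese hgr hchar hd hdelta hnoeth hnorm hdunit hX.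
exists (der_ext comp d delta); split=> //.
- move=> D' hD' D'_extends.
  apply: (derivation_eq_on_veronese hgr hchar (ltnW hd) hD' hD) => x Vx.
  by rewrite D'_extends // extends.
- by move=> hLN; apply: (der_ext_nilpotent hgr hchar hd hdelta hnoeth hnorm hdunit hX hLN).
Qed.
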